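(* Let $P_0(k)=C_{p0}T_{p0}^k-C_mT_m^k$ be a low pair function (so $C_{p0},C_m>0$ and $0<T_{p0}<T_m<1$), and let $C_{pi}>0$ and $0<T_{pi}<T_m$, $i=1,\dots,N$. Then there exist $j\in\{0,1,2\}$ and positive numbers $C_{m0},\dots,C_{mN}$ with $\sum_{i=0}^N C_{mi}=C_m$ such that the low pair functions $L_i(k)=C_{pi}T_{pi}^k-C_{mi}T_m^k$, $i=0,\dots,N$, all have their $j$-th derivatives vanishing at a common point (i.e. are synchronized at a common characteristic point), and $$P_0(k)+\sum_{i=1}^N C_{pi}T_{pi}^k=\sum_{i=0}^N L_i(k).$$
   Context: A low pair function is $C_pT_p^k-C_mT_m^k$ with $C_p,C_m>0$ and $0<T_p<T_m<1$, real variable $k$. Its characteristic points are the zeros of the function (abscissa intersection), of its first derivative (minimum) and of its second derivative (inflection point). *)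

From Stdlib Require Import Reals.
From Coquelicot Require Import Coquelicot.
Open Scope R_scope.

Definition low_pair (Cp Tp Cm Tm : R) (k : R) : R :=
  Cp * Rpower Tp k - Cm * Rpower Tm k.

(* All the L_i are made to vanish at one common point k0.  Writing
   r_i = T_pi / T_m < 1, the choice C_mi = C_pi r_i^k0 makes L_i(k0) = 0, and
   the constraint sum C_mi = C_m asks for k0 with sum_i C_pi r_i^k0 = C_m.
   This weighted power sum is continuous, tends to 0 as k -> +oo and exceeds
   any bound as k -> -oo, so the intermediate value theorem provides k0. *)

From Stdlib Require Import Reals Lra Lia.
From Coquelicot Require Import Coquelicot.
Open Scope R_scope.

Lemma Rpower_ln_div (r y : R) : 0 < r -> r <> 1 -> 0 < y ->
  Rpower r (ln y / ln r) = y.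
Proof.
  intros Hr Hr1 Hy.
  assert (ln r <> 0).
  { intros H0. apply Hr1, ln_inv; [lra | lra | now rewrite ln_1]. }
  unfold Rpower. replace (ln y / ln r * ln r) with (ln y) by (field; assumption).
  now apply exp_ln.
Qed.

Lemma Rpower_lt_1_eventually_le (r eps : R) : 0 < r < 1 -> 0 < eps ->
  exists K, forall k, K <= k -> Rpower r k <= eps.
Proof.
  intros Hr Heps.
  assert (Hln : ln r < 0) by (rewrite <- ln_1; apply ln_increasing; lra).
  exists (ln eps / ln r). intros k Hk.
  rewrite <- (Rpower_ln_div r eps) by lra.
  unfold Rpower.
  assert (Hexp : k * ln r <= ln eps / ln r * ln r) by nra.
  destruct (Rle_lt_or_eq_dec _ _ Hexp) as [Hlt | ->].
  - left. now apply exp_increasing.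
  - right. reflexivity.
Qed.

Section WeightedPowerSum.

Variables c r : nat -> R.

Definition weighted_power_sum (n : nat) (k : R) : R :=
  sum_n (fun i => c i * Rpower (r i) k) n.

Lemma weighted_power_sum_S (n : nat) (k : R) :
  weighted_power_sum (S n) k = weighted_power_sum n k + c (S n) * Rpower (r (S n)) k.
Proof. unfold weighted_power_sum. now rewrite sum_Sn. Qed.

Lemma continuity_weighted_power_sum (n : nat) : continuity (weighted_power_sum n).
Proof.
  intros x. apply derivable_continuous_pt, (ex_derive_Reals_0 (weighted_power_sum n)).
  apply (ex_derive_sum_n (K := R_AbsRing) (V := R_NormedModule)). intros i _.
  unfold Rpower. auto_derive. exact I.
Qed.

Lemma weighted_power_sum_ge_head (n : nat) (k : R) :
  (forall i, (i <= n)%nat -> 0 <= c i) ->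
  c 0%nat * Rpower (r 0%nat) k <= weighted_power_sum n k.
Proof.
  induction n as [|n IH]; intros Hc.
  - unfold weighted_power_sum. rewrite sum_O. lra.
  - rewrite weighted_power_sum_S.
    assert (0 <= c (S n) * Rpower (r (S n)) k).
    { apply Rmult_le_pos; [apply Hc; lia | apply Rlt_le, exp_pos]. }
    enough (c 0%nat * Rpower (r 0%nat) k <= weighted_power_sum n k) by lra.
    apply IH. intros i Hi. apply Hc. lia.
Qed.

Lemma weighted_power_sum_eventually_le (n : nat) (eps : R) :
  (forall i, (i <= n)%nat -> 0 < c i /\ 0 < r i < 1) -> 0 < eps ->
  exists K, forall k, K <= k -> weighted_power_sum n k <= eps.
Proof.
  revert eps. induction n as [|n IH]; intros eps Hcr Heps.
  - destruct (Hcr 0%nat (le_n _)) as [Hc0 Hr0].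
    destruct (Rpower_lt_1_eventually_le (r 0%nat) (eps / c 0%nat)) as [K HK];
      [assumption | now apply Rdiv_lt_0_compat |].
    exists K. intros k Hk. unfold weighted_power_sum. rewrite sum_O.
    specialize (HK k Hk). apply Rmult_le_compat_l with (r := c 0%nat) in HK; [|lra].
    replace (c 0%nat * (eps / c 0%nat)) with eps in HK by (field; lra). exact HK.
  - destruct (IH (eps / 2)) as [K1 HK1]; [intros i Hi; apply Hcr; lia | lra |].
    destruct (Hcr (S n) (le_n _)) as [Hc Hr].
    destruct (Rpower_lt_1_eventually_le (r (S n)) (eps / 2 / c (S n))) as [K2 HK2];
      [assumption | apply Rdiv_lt_0_compat; lra |].
    exists (Rmax K1 K2). intros k Hk. rewrite weighted_power_sum_S.
    specialize (HK1 k (Rle_trans _ _ _ (Rmax_l _ _) Hk)).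
    specialize (HK2 k (Rle_trans _ _ _ (Rmax_r _ _) Hk)).
    apply Rmult_le_compat_l with (r := c (S n)) in HK2; [|lra].
    replace (c (S n) * (eps / 2 / c (S n))) with (eps / 2) in HK2 by (field; lra).
    lra.
Qed.

Lemma weighted_power_sum_attains (n : nat) (y : R) :
  (forall i, (i <= n)%nat -> 0 < c i /\ 0 < r i < 1) -> 0 < y ->
  exists k, weighted_power_sum n k = y.
Proof.
  intros Hcr Hy.
  destruct (Hcr 0%nat (Nat.le_0_l _)) as [Hc0 Hr0].
  set (klo := ln (y / c 0%nat) / ln (r 0%nat)).
  assert (Hlo : y <= weighted_power_sum n klo).
  { eapply Rle_trans; [| apply weighted_power_sum_ge_head].
    - unfold klo. rewrite Rpower_ln_div by (try apply Rdiv_lt_0_compat; lra).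
      right. field. lra.
    - intros i Hi. apply Rlt_le, Hcr, Hi. }
  destruct (weighted_power_sum_eventually_le n y Hcr Hy) as [K HK].
  assert (Hhi : weighted_power_sum n (Rmax K klo) <= y) by apply HK, Rmax_l.
  destruct (IVT_cor (fun k => weighted_power_sum n k - y) klo (Rmax K klo))
    as (k0 & _ & Hk0).
  - apply continuity_minus;
      [apply continuity_weighted_power_sum | apply continuity_const; now intros ? ?].
  - apply Rmax_r.
  - apply Rmult_le_0_l; lra.
  - exists k0. lra.
Qed.

End WeightedPowerSum.

Lemma low_pair_root (Cp Tp Tm k0 : R) : 0 < Tp -> 0 < Tm ->
  low_pair Cp Tp (Cp * Rpower (Tp / Tm) k0) Tm k0 = 0.
Proof.
  intros HTp HTm. unfold low_pair.
  rewrite Rmult_assoc, Rpower_mult_distr by (try apply Rdiv_lt_0_compat; lra).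
  replace (Tp / Tm * Tm) with Tp by (field; lra). ring.
Qed.

Lemma low_pair_sum_split (N : nat) (Cp Tp Cmi : nat -> R) (Cm Tm k : R) :
  sum_n Cmi N = Cm ->
  low_pair (Cp 0%nat) (Tp 0%nat) Cm Tm k + sum_n_m (fun i => Cp i * Rpower (Tp i) k) 1 N
  = sum_n (fun i => low_pair (Cp i) (Tp i) (Cmi i) Tm k) N.
Proof.
  intros Hsum. set (P := fun i => Cp i * Rpower (Tp i) k).
  assert (Hhead : sum_n P N = P 0%nat + sum_n_m P 1 N)
    by (unfold sum_n; now rewrite sum_Sn_m by lia).
  unfold low_pair. rewrite sum_n_Reals, minus_sum, <- scal_sum, <- !sum_n_Reals.
  fold P. rewrite Hhead, Hsum. unfold P. ring.
Qed.

Theorem lemma5 (N : nat) (Cp Tp : nat -> R) (Cm Tm : R) :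
  0 < Cp 0%nat -> 0 < Cm -> 0 < Tp 0%nat -> Tp 0%nat < Tm -> Tm < 1 ->
  (forall i : nat, (1 <= i <= N)%nat -> 0 < Cp i /\ 0 < Tp i /\ Tp i < Tm) ->
  exists j : nat, (j <= 2)%nat /\
  exists Cmi : nat -> R,
    (forall i : nat, (i <= N)%nat -> 0 < Cmi i) /\
    sum_n Cmi N = Cm /\
    (exists k0 : R, forall i : nat, (i <= N)%nat ->
        Derive_n (low_pair (Cp i) (Tp i) (Cmi i) Tm) j k0 = 0) /\
    (forall k : R,
        low_pair (Cp 0%nat) (Tp 0%nat) Cm Tm k
          + sum_n_m (fun i => Cp i * Rpower (Tp i) k) 1 N
        = sum_n (fun i => low_pair (Cp i) (Tp i) (Cmi i) Tm k) N).
Proof.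
  intros HCp0 HCm HTp0 HTp0m HTm Hdata.
  set (r := fun i => Tp i / Tm).
  assert (Hpos : forall i, (i <= N)%nat -> 0 < Cp i /\ 0 < Tp i /\ Tp i < Tm).
  { intros [|i] Hi; [auto | apply Hdata; lia]. }
  assert (Hcr : forall i, (i <= N)%nat -> 0 < Cp i /\ 0 < r i < 1).
  { intros i Hi. destruct (Hpos i Hi) as (HC & HT & HTT). unfold r.
    repeat split; [assumption | apply Rdiv_lt_0_compat; lra |].
    apply Rmult_lt_reg_r with Tm; [lra |]. field_simplify; lra. }
  destruct (weighted_power_sum_attains Cp r N Cm Hcr HCm) as [k0 Hk0].
  exists 0%nat. split; [lia |].
  exists (fun i => Cp i * Rpower (r i) k0). repeat split.
  - intros i Hi. apply Rmult_lt_0_compat; [apply Hcr, Hi | apply exp_pos].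
  - exact Hk0.
  - exists k0. intros i Hi. apply low_pair_root; [apply Hpos, Hi | lra].
  - intros k. now apply low_pair_sum_split.
Qed.
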